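(* Let $\Phi,\Psi$ be join doctrines such that $\Psi^{\mathrm{op}}$-meets commute with $\Phi$-joins in $2$. The following are equivalent: (i) for every poset $X$, $\mathcal{L}(X)$ is generated under $\Phi$-joins by $\Psi(X)$; (ii) for every $\Psi$-suplattice $X$, $\Phi(X)$ consists precisely of all $\Psi$-ideals of $X$; (iii) for every poset $X$ there is a sub-$\Psi$-suplattice $\Psi'(X)\subseteq\mathcal{L}(X)$ containing all principal ideals ${\downarrow}x$ such that $\Phi(\Psi'(X))$ contains all $\Psi$-ideals of $\Psi'(X)$. If these hold, then for every poset $X$, $\Psi(X)=\mathcal{L}(X)_\Phi=\Phi^*(X)$, $\mathcal{L}(X)\cong\Phi(\Psi(X))$ is $\Phi$-algebraic, $\Phi$ is a continuous join doctrine, and $\Phi=\Psi^*$.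
   Context: A join doctrine is a class $\Phi$ of posets such that: (1) the one-element poset is in $\Phi$; (2) if a poset $P$ is the union of a set $\mathcal{S}$ of subposets each in $\Phi$ and $\mathcal{S}$ (ordered by inclusion) is in $\Phi$, then $P\in\Phi$; (3) if $f:P\to Q$ is monotone with cofinal image and $P\in\Phi$ then $Q\in\Phi$; (4) cofinal subposets of members of $\Phi$ are in $\Phi$. For a poset $X$, $\mathcal{L}(X)$ = lower subsets ordered by inclusion, $\Phi(X)$ = lower subsets belonging (as subposets) to $\Phi$. A $\Phi$-join is a join of a subset in $\Phi$; a $\Psi$-suplattice is a poset with all $\Psi$-joins; a $\Psi$-ideal is a lower subset closed under $\Psi$-joins; a sub-$\Psi$-suplattice is a subset closed under $\Psi$-joins. ''Generated under $\Phi$-joins by $S$'' means the smallest subset containing $S$ and closed under $\Phi$-joins is everything. In a $\Phi$-suplattice $Y$: $\Downarrow y=\bigcap\{\phi\in\Phi(Y)\mid y\le\bigvee\phi\}$, $y$ is $\Phi$-compact if $y\in\Downarrow y$, $Y_\Phi$ = set of $\Phi$-compact elements; $\Phi$-algebraic means generated under $\Phi$-joins by $Y_\Phi$. $\Phi^*(X):=\mathcal{L}(X)_\Phi$; $\Phi^*$ also denotes the class of posets $\psi$ with $\psi\in\Phi^*(\psi)$, similarly $\Psi^*$. ''$\Psi^{\mathrm{op}}$-meets commute with $\Phi$-joins in $2$'': for all posets $X,Y$, $\phi\in\Phi(Y)$, $\psi\in\Psi(X)$ and monotone $F:X^{\mathrm{op}}\times Y\to 2$, $\bigwedge_{x\in\psi}\bigvee_{y\in\phi}F(x,y)=\bigvee_{y\in\phi}\bigwedge_{x\in\psi}F(x,y)$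 (equivalently $\Psi(X)\subseteq\Phi^*(X)$ for all $X$). $\Phi$ is a continuous join doctrine if $\mathcal{L}(X)$ is $\Phi$-continuous for every poset $X$, i.e. each $\theta\in\mathcal{L}(X)$ has $\phi\in\Phi(\mathcal{L}(X))$ with $\phi\subseteq\Downarrow\theta$ and $\theta\subseteq\bigcup\phi$. *)

From Stdlib Require Import FunctionalExtensionality PropExtensionality ProofIrrelevance.

Set Implicit Arguments.
Unset Strict Implicit.

Record Poset := {
  car :> Type;
  le : car -> car -> Prop;
  le_refl : forall x, le x x;
  le_trans : forall x y z, le x y -> le y z -> le x z;
  le_antisym : forall x y, le x y -> le y x -> x = y }.

Arguments le {p} _ _.

Definition Class := Poset -> Prop.

Definition incl {T : Type} (A B : T -> Prop) := forall x, A x -> B x.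

Definition subposet (X : Poset) (S : X -> Prop) : Poset.
Proof.
  refine {| car := {x : X | S x};
            le := fun a b => le (proj1_sig a) (proj1_sig b) |}.
  - intros x; apply le_refl.
  - intros x y z; apply le_trans.
  - intros [x hx] [y hy] h1 h2; simpl in *.
    pose proof (le_antisym h1 h2); subst y.
    f_equal; apply proof_irrelevance.
Defined.
Arguments subposet : clear implicits.

Definition powposet (T : Type) : Poset.
Proof.
  refine {| car := T -> Prop; le := @incl T |}.
  - intros A x h; exact h.
  - intros A B C h1 h2 x h; exact (h2 x (h1 x h)).
  - intros A B h1 h2; apply functional_extensionality; intros x;
      apply propositional_extensionality; split; auto.
Defined.

Definition unitposet : Poset.
Proof.
  refine {| car := unit; le := fun _ _ => True |}; auto.
  intros [] [] _ _; reflexivity.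
Defined.

Definition monotone (P Q : Poset) (f : P -> Q) :=
  forall a b, le a b -> le (f a) (f b).

Definition cofinal (P : Poset) (S : P -> Prop) :=
  forall x, exists y, S y /\ le x y.

Definition image (P Q : Type) (f : P -> Q) : Q -> Prop :=
  fun y => exists x, f x = y.

Definition JoinDoctrine (Phi : Class) : Prop :=
  Phi unitposet /\
  (forall (X : Poset) (SS : (X -> Prop) -> Prop),
      (forall A, SS A -> Phi (subposet X A)) ->
      Phi (subposet (powposet X) SS) ->
      (forall x, exists A, SS A /\ A x) ->
      Phi X) /\
  (forall (P Q : Poset) (f : P -> Q),
      monotone f -> cofinal (image f) -> Phi P -> Phi Q) /\
  (forall (P : Poset) (S : P -> Prop), cofinal S -> Phi P -> Phi (subposet P S)).

Definition lower (X : Poset) (A : X -> Prop) :=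
  forall x y : X, le x y -> A y -> A x.

Definition LL (X : Poset) : Poset := subposet (powposet X) (@lower X).

(** Phi(X), as a predicate on L(X). *)
Definition PhiOf (Phi : Class) (X : Poset) : LL X -> Prop :=
  fun A => Phi (subposet X (proj1_sig A)).
Arguments PhiOf : clear implicits.

Lemma down_lower (X : Poset) (x : X) : lower (fun y => le y x).
Proof. intros a b h1 h2; eapply le_trans; eassumption. Qed.

Definition down (X : Poset) (x : X) : LL X :=
  exist (@lower X) (fun y => le y x) (@down_lower X x).

Lemma top_lower (X : Poset) : lower (fun _ : X => True).
Proof. intros x y _ _; exact I. Qed.

Definition topL (X : Poset) : LL X := exist (@lower X) (fun _ => True) (@top_lower X).

Definition is_ub (X : Poset) (S : X -> Prop) (s : X) := forall x, S x -> le x s.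
Definition is_join (X : Poset) (S : X -> Prop) (s : X) :=
  is_ub S s /\ forall t, is_ub S t -> le s t.

Definition suplattice (Psi : Class) (X : Poset) :=
  forall S : X -> Prop, Psi (subposet X S) -> exists s, is_join S s.

Definition closed_joins (Psi : Class) (X : Poset) (T : X -> Prop) :=
  forall (S : X -> Prop) (s : X), incl S T -> Psi (subposet X S) -> is_join S s -> T s.

Definition ideal (Psi : Class) (X : Poset) (I : X -> Prop) :=
  lower I /\ closed_joins Psi I.

Definition generated (Phi : Class) (X : Poset) (G : X -> Prop) :=
  forall T : X -> Prop, incl G T -> closed_joins Phi T -> forall x, T x.

Definition Ddown (Phi : Class) (Y : Poset) (y : Y) : Y -> Prop :=
  fun a => forall phi : Y -> Prop, lower phi -> Phi (subposet Y phi) ->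
    forall s, is_join phi s -> le y s -> phi a.
Arguments Ddown : clear implicits.

Definition compact (Phi : Class) (Y : Poset) (y : Y) := Ddown Phi Y y y.
Arguments compact : clear implicits.

Definition algebraic (Phi : Class) (Y : Poset) :=
  suplattice Phi Y /\ generated Phi (compact Phi Y).

Definition PhiStar (Phi : Class) (X : Poset) : LL X -> Prop := compact Phi (LL X).
Arguments PhiStar : clear implicits.

Definition StarClass (Psi : Class) : Class :=
  fun P => PhiStar Psi P (topL P).

Definition commute_in_2 (Psi Phi : Class) :=
  forall (X Y : Poset) (phi : Y -> Prop) (psi : X -> Prop),
    lower phi -> Phi (subposet Y phi) ->
    lower psi -> Psi (subposet X psi) ->
    forall F : X -> Y -> Prop,
      (forall x x' y y', le x' x -> le y y' -> F x y -> F x' y') ->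
      ((forall x, psi x -> exists y, phi y /\ F x y) <->
       (exists y, phi y /\ forall x, psi x -> F x y)).

Definition continuous_doctrine (Phi : Class) :=
  forall (X : Poset) (theta : LL X),
    exists phi : LL X -> Prop,
      lower phi /\ Phi (subposet (LL X) phi) /\
      incl phi (Ddown Phi (LL X) theta) /\
      (forall x, proj1_sig theta x -> exists a, phi a /\ proj1_sig a x).

Definition order_iso (X Y : Poset) :=
  exists (f : X -> Y) (g : Y -> X),
    monotone f /\ monotone g /\ (forall x, g (f x) = x) /\ (forall y, f (g y) = y).

Definition PsiPoset (Psi : Class) (X : Poset) : Poset := subposet (LL X) (PhiOf Psi X).

Definition PhiPoset (Phi : Class) (Y : Poset) : Poset := subposet (LL Y) (PhiOf Phi Y).

(* Everything goes through one property of a poset X, [psi_below_phi X]: for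
   every lower set θ, the family {B ∈ Ψ(X) | B ⊆ θ} belongs to Φ.  Commutation
   of Ψ^op-meets with Φ-joins in 2 makes the members of Ψ(X)
   Φ-compact in L(X).  Since θ is the union of the principal ideals below it,
   the property makes every θ a Φ-join of members of Ψ(X), giving (i); conversely
   (i) yields it by induction over Φ-joins, compactness showing that the family
   below a Φ-join is the union of the families below its terms.  Under it, a
   Ψ-ideal A of a Ψ-suplattice is the image of {B ∈ Ψ(X) | B ⊆ A} under taking
   joins, hence in Φ; (ii) applied to the Ψ-suplattice Ψ(X) and its ideal of
   members below θ gives it back, and so does (iii) applied to the discrete poset
   on {B ∈ Ψ(X) | B ⊆ θ}, whose subsets that are empty or in Ψ form a Ψ-ideal.
   The remaining claims are read off: θ ↦ {B ∈ Ψ(X) | B ⊆ θ} is the isomorphism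
   L(X) ≅ Φ(Ψ(X)), and P ∈ Φ iff P is Ψ-compact in L(P), through the Ψ-ideal of
   proper lower sets of P. *)

From Stdlib Require Import FunctionalExtensionality PropExtensionality Classical ClassicalEpsilon.

Set Implicit Arguments.
Unset Strict Implicit.

Lemma pred_ext (T : Type) (A B : T -> Prop) : (forall x, A x <-> B x) -> A = B.
Proof.
  intros h; apply functional_extensionality; intros x.
  apply propositional_extensionality, h.
Qed.

Lemma LL_ext (X : Poset) (a b : LL X) :
  (forall x, proj1_sig a x <-> proj1_sig b x) -> a = b.
Proof. intros h; apply le_antisym; intros x; apply h. Qed.

Definition bigcup (I T : Type) (S : I -> Prop) (f : I -> T -> Prop) : T -> Prop :=
  fun t => exists i, S i /\ f i t.

Lemma bigcup_lower (I : Type) (X : Poset) (S : I -> Prop) (g : I -> LL X) :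
  lower (bigcup S (fun i => proj1_sig (g i))).
Proof.
  intros a b h [i [hi hb]]; exists i; split; [exact hi | exact (proj2_sig (g i) a b h hb)].
Qed.

Definition Lbigcup (I : Type) (X : Poset) (S : I -> Prop) (g : I -> LL X) : LL X :=
  exist _ _ (@bigcup_lower I X S g).

Lemma join_unique (Y : Poset) (S : Y -> Prop) (s t : Y) :
  is_join S s -> is_join S t -> s = t.
Proof. intros [hs ls] [ht lt]; apply le_antisym; auto. Qed.

Lemma Lbigcup_join (X : Poset) (S : LL X -> Prop) : is_join S (Lbigcup S (fun B => B)).
Proof.
  split.
  - intros B hB x hx; exists B; split; assumption.
  - intros t ht x [B [hB hx]]; exact (ht B hB x hx).
Qed.

Lemma LL_join_eq (X : Poset) (S : LL X -> Prop) (s : LL X) :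
  is_join S s -> s = Lbigcup S (fun B => B).
Proof. intros hj; exact (join_unique hj (Lbigcup_join S)). Qed.

Lemma LL_suplattice (Phi : Class) (X : Poset) : suplattice Phi (LL X).
Proof. intros S _; exists (Lbigcup S (fun B => B)); apply Lbigcup_join. Qed.

Definition dcl (Y : Poset) (S : Y -> Prop) : Y -> Prop :=
  fun y => exists s, S s /\ le y s.

Lemma dcl_lower (Y : Poset) (S : Y -> Prop) : lower (dcl S).
Proof. intros a b h [s [hs hb]]; exists s; split; [exact hs | exact (le_trans h hb)]. Qed.

Lemma dcl_join (Y : Poset) (S : Y -> Prop) (s : Y) : is_join S s -> is_join (dcl S) s.
Proof.
  intros [ub least]; split.
  - intros y [t [ht hy]]; exact (le_trans hy (ub t ht)).
  - intros u hu; apply least; intros t ht; apply hu.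
    exists t; split; [exact ht | apply le_refl].
Qed.

Lemma Ddown_below_compact (Phi : Class) (Y : Poset) (b c y : Y) :
  compact Phi Y c -> le c y -> le b c -> Ddown Phi Y y b.
Proof.
  intros hc hcy hbc phi hl hphi s hj hys.
  exact (hl b c hbc (hc phi hl hphi s hj (le_trans hcy hys))).
Qed.

Definition discrete (T : Type) : Poset.
Proof.
  refine {| car := T; le := @eq T |}.
  - intros; reflexivity.
  - intros x y z h1 h2; congruence.
  - intros x y h _; exact h.
Defined.

Section JoinDoctrineFacts.

Variable Phi : Class.
Hypothesis JD : JoinDoctrine Phi.

Lemma jd_unit : Phi unitposet.
Proof. exact (proj1 JD). Qed.

Lemma jd_covering_union (X : Poset) (SS : (X -> Prop) -> Prop) :
  (forall A, SS A -> Phi (subposet X A)) -> Phi (subposet (powposet X) SS) ->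
  (forall x, exists A, SS A /\ A x) -> Phi X.
Proof. exact (proj1 (proj2 JD) X SS). Qed.

Lemma jd_cofinal_image (P Q : Poset) (f : P -> Q) :
  monotone f -> cofinal (image f) -> Phi P -> Phi Q.
Proof. exact (proj1 (proj2 (proj2 JD)) P Q f). Qed.

Lemma jd_cofinal (P : Poset) (S : P -> Prop) : cofinal S -> Phi P -> Phi (subposet P S).
Proof. exact (proj2 (proj2 (proj2 JD)) P S). Qed.

Lemma jd_top (P : Poset) (t : P) : (forall x, le x t) -> Phi P.
Proof.
  intros ht; apply (@jd_cofinal_image unitposet P (fun _ => t)).
  - intros a b _; apply le_refl.
  - intros x; exists t; split; [exists tt; reflexivity | apply ht].
  - exact jd_unit.
Qed.

Lemma jd_transfer (P X : Poset) (A : X -> Prop) (f : P -> X) :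
  monotone f -> (forall p, A (f p)) -> (forall x, A x -> exists p, le x (f p)) ->
  Phi P -> Phi (subposet X A).
Proof.
  intros hf hA hc; apply (jd_cofinal_image (f := fun p => exist A (f p) (hA p) : subposet X A)).
  - intros a b h; exact (hf a b h).
  - intros [x hx]; destruct (hc x hx) as [p hp].
    exists (exist A (f p) (hA p)); split; [exists p; reflexivity | exact hp].
Qed.

Lemma jd_image (Y Z : Poset) (S : Y -> Prop) (f : Y -> Z) :
  monotone f -> Phi (subposet Y S) ->
  Phi (subposet Z (fun z => exists y, S y /\ f y = z)).
Proof.
  intros hf; apply (jd_transfer (f := fun p : subposet Y S => f (proj1_sig p))).
  - intros a b h; exact (hf _ _ h).
  - intros p; exists (proj1_sig p); split; [exact (proj2_sig p) | reflexivity].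
  - intros z [y [hy <-]]; exists (exist S y hy); apply le_refl.
Qed.

Lemma jd_cofinal_restrict (Y : Poset) (A B : Y -> Prop) :
  incl B A -> (forall a, A a -> exists b, B b /\ le a b) ->
  Phi (subposet Y A) -> Phi (subposet Y B).
Proof.
  intros hBA hcof hA.
  assert (hB : Phi (subposet (subposet Y A) (fun r => B (proj1_sig r)))).
  { apply jd_cofinal; [| exact hA].
    intros [a ha]; destruct (hcof a ha) as [b [hb hab]].
    exists (exist A b (hBA b hb)); split; [exact hb | exact hab]. }
  replace B with (fun y => exists r : subposet Y A, B (proj1_sig r) /\ proj1_sig r = y).
  - exact (jd_image (f := fun r : subposet Y A => proj1_sig r) (fun _ _ h => h) hB).
  - apply pred_ext; intros y; split.
    + intros [r [hr <-]]; exact hr.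
    + intros hy; exists (exist A y (hBA y hy)); split; [exact hy | reflexivity].
Qed.

Lemma jd_dcl (Y : Poset) (S : Y -> Prop) : Phi (subposet Y S) -> Phi (subposet Y (dcl S)).
Proof.
  apply (jd_transfer (f := fun p : subposet Y S => proj1_sig p)).
  - intros a b h; exact h.
  - intros p; exists (proj1_sig p); split; [exact (proj2_sig p) | apply le_refl].
  - intros y [s [hs hy]]; exists (exist S s hs); exact hy.
Qed.

Lemma jd_bigcup_sets (X : Poset) (SS : (X -> Prop) -> Prop) :
  (forall A, SS A -> Phi (subposet X A)) -> Phi (subposet (powposet X) SS) ->
  Phi (subposet X (bigcup SS (fun A => A))).
Proof.
  intros hSS hfam.
  set (U := bigcup SS (fun A => A)).
  apply (jd_covering_union
           (SS := fun B => exists A, SS A /\ (fun u : subposet X U => A (proj1_sig u)) = B)).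
  - intros B [A [hA <-]].
    apply (jd_transfer (f := fun p : subposet X A =>
             exist U (proj1_sig p) (ex_intro _ A (conj hA (proj2_sig p))) : subposet X U));
      [| | | exact (hSS A hA)].
    + intros a b h; exact h.
    + intros p; exact (proj2_sig p).
    + intros u hu; exists (exist A (proj1_sig u) hu); exact (le_refl (proj1_sig u)).
  - exact (@jd_image (powposet X) (powposet (subposet X U)) SS
             (fun A u => A (proj1_sig u)) (fun A B h u hu => h _ hu) hfam).
  - intros [x [A [hA hx]]]; exists (fun u : subposet X U => A (proj1_sig u)).
    split; [exists A; split; [exact hA | reflexivity] | exact hx].
Qed.

Lemma jd_bigcup (Y X : Poset) (S : Y -> Prop) (f : Y -> X -> Prop) :
  (forall a b, le a b -> incl (f a) (f b)) ->
  (forall y, S y -> Phi (subposet X (f y))) -> Phi (subposet Y S) ->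
  Phi (subposet X (bigcup S f)).
Proof.
  intros hf hS hY.
  replace (bigcup S f) with
    (bigcup (fun A => exists y, S y /\ f y = A) (fun A : X -> Prop => A)).
  - apply jd_bigcup_sets.
    + intros A [y [hy <-]]; exact (hS y hy).
    + exact (@jd_image Y (powposet X) S f hf hY).
  - apply pred_ext; intros x; split.
    + intros [A [[y [hy <-]] hx]]; exists y; split; assumption.
    + intros [y [hy hx]]; exists (f y); split; [exists y; split; [exact hy | reflexivity] | exact hx].
Qed.

(* The empty set is the union of the empty family, but [Phi] need not contain
   the empty poset. *)
Definition in_or_empty (X : Poset) (A : X -> Prop) : Prop :=
  (forall x, ~ A x) \/ Phi (subposet X A).

Lemma jd_union_or_empty (Y X : Poset) (S : Y -> Prop) (f : Y -> X -> Prop) :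
  (forall a b, le a b -> incl (f a) (f b)) ->
  (forall y, S y -> in_or_empty (f y)) -> Phi (subposet Y S) ->
  in_or_empty (bigcup S f).
Proof.
  intros hf hS hY.
  destruct (classic (exists x, bigcup S f x)) as [[x1 [y1 [hy1 hx1]]] | hnone].
  2: { left; intros x hx; exact (hnone (ex_intro _ x hx)). }
  right.
  set (F := fun A : powposet X => exists y, S y /\ f y = A).
  set (Fne := fun A : powposet X => F A /\ exists x, A x).
  replace (bigcup S f) with (bigcup Fne (fun A : X -> Prop => A)).
  - apply jd_bigcup_sets.
    + intros A [[y [hy <-]] [x hx]].
      destruct (hS y hy) as [he | hA]; [destruct (he x hx) | exact hA].
    + apply (jd_cofinal_restrict (A := F)); [intros A hA; exact (proj1 hA) | |].
      * intros A hA; destruct (classic (exists x, A x)) as [hne | he].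
        -- exists A; split; [split; assumption | apply le_refl].
        -- exists (f y1); split.
           ++ split; [exists y1; split; [exact hy1 | reflexivity] | exists x1; exact hx1].
           ++ intros x hx; destruct (he (ex_intro _ x hx)).
      * exact (@jd_image Y (powposet X) S f hf hY).
  - apply pred_ext; intros x; split.
    + intros [A [[[y [hy <-]] _] hx]]; exists y; split; assumption.
    + intros [y [hy hx]]; exists (f y).
      split; [split; [exists y; split; [exact hy | reflexivity] | exists x; exact hx] | exact hx].
Qed.

Lemma jd_down (X : Poset) (x : X) : Phi (subposet X (proj1_sig (down x))).
Proof.
  apply (jd_top (t := exist (fun y => le y x) x (le_refl x) : subposet X (proj1_sig (down x)))).
  intros p; exact (proj2_sig p).
Qed.

Lemma jd_empty (Y Z : Poset) (S : Y -> Prop) (T : Z -> Prop) :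
  (forall y, ~ S y) -> (forall z, ~ T z) -> Phi (subposet Y S) -> Phi (subposet Z T).
Proof.
  intros hS hT.
  apply (jd_transfer (f := fun p : subposet Y S => match hS _ (proj2_sig p) return Z with end)).
  - intros a; destruct (hS _ (proj2_sig a)).
  - intros a; destruct (hS _ (proj2_sig a)).
  - intros z hz; destruct (hT z hz).
Qed.

Lemma jd_discrete_sub (T : Type) (A B : discrete T -> Prop) (t0 : T) :
  incl A B -> A t0 -> Phi (subposet _ B) -> Phi (subposet _ A).
Proof.
  intros hAB h0.
  apply (jd_transfer (f := fun p : subposet _ B =>
           if excluded_middle_informative (A (proj1_sig p)) then proj1_sig p else t0)).
  - intros [x1 h1] [x2 h2] h; simpl in h; subst x2; apply le_refl.
  - intros p; destruct (excluded_middle_informative (A (proj1_sig p))); assumption.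
  - intros x hx; exists (exist B x (hAB x hx)); simpl.
    destruct (excluded_middle_informative (A x)); [reflexivity | contradiction].
Qed.

Lemma jd_reflect (P Q : Poset) (A : Q -> Prop) (e : P -> Q) :
  (forall a b, le (e a) (e b) -> le a b) -> (forall p, A (e p)) ->
  (forall q, A q -> exists p, le q (e p)) -> Phi (subposet Q A) -> Phi P.
Proof.
  intros he hA hcof hPhi.
  assert (hE : Phi (subposet Q (fun q => exists p, e p = q))).
  { apply (jd_cofinal_restrict (A := A)); [intros q [p <-]; apply hA | | exact hPhi].
    intros q hq; destruct (hcof q hq) as [p hp].
    exists (e p); split; [exists p; reflexivity | exact hp]. }
  pose (inv := fun r : subposet Q (fun q => exists p, e p = q) =>
                 proj1_sig (constructive_indefinite_description _ (proj2_sig r))).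
  assert (inv_spec : forall r, e (inv r) = proj1_sig r).
  { intros r; exact (proj2_sig (constructive_indefinite_description _ (proj2_sig r))). }
  apply (jd_cofinal_image (f := inv)); [| | exact hE].
  - intros a b h; apply he; rewrite !inv_spec; exact h.
  - intros p; set (r := exist (fun q => exists p, e p = q) (e p) (ex_intro _ p eq_refl)
                 : subposet Q (fun q => exists p, e p = q)).
    exists (inv r); split; [exists r; reflexivity |].
    apply he; rewrite inv_spec; apply le_refl.
Qed.

Lemma compact_below_join (Y : Poset) (y s : Y) (S : Y -> Prop) :
  compact Phi Y y -> Phi (subposet Y S) -> is_join S s -> le y s ->
  exists t, S t /\ le y t.
Proof.
  intros hc hS hj hys; exact (hc (dcl S) (@dcl_lower Y S) (jd_dcl hS) s (dcl_join hj) hys).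
Qed.

End JoinDoctrineFacts.

Section Doctrines.

Variables Phi Psi : Class.
Hypothesis JDf : JoinDoctrine Phi.
Hypothesis JDs : JoinDoctrine Psi.
Hypothesis Hc : commute_in_2 Psi Phi.

Definition ideal_condition : Prop :=
  forall X : Poset, suplattice Psi X ->
    forall A : X -> Prop, (lower A /\ Phi (subposet X A)) <-> ideal Psi A.

Definition subsuplattice_condition : Prop :=
  forall X : Poset, exists P : LL X -> Prop,
    closed_joins Psi P /\ (forall x : X, P (down x)) /\
    (forall I : subposet (LL X) P -> Prop, ideal Psi I -> Phi (subposet _ I)).

Definition psi_below (X : Poset) (theta : LL X) : LL X -> Prop :=
  fun B => PhiOf Psi X B /\ le B theta.

Definition psi_below_phi (X : Poset) : Prop :=
  forall theta : LL X, Phi (subposet (LL X) (psi_below theta)).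

Lemma down_psi_below (X : Poset) (theta : LL X) (x : X) :
  proj1_sig theta x -> psi_below theta (down x).
Proof.
  intros hx; split; [exact (jd_down JDs x) |].
  intros y hy; exact (proj2_sig theta y x hy hx).
Qed.

Lemma psi_below_join (X : Poset) (theta : LL X) : is_join (psi_below theta) theta.
Proof.
  split; [intros B [_ h]; exact h |].
  intros t ht x hx; exact (ht (down x) (down_psi_below hx) x (le_refl x)).
Qed.

Lemma commute_cover (X Y : Poset) (A : LL X) (S : Y -> Prop) (g : Y -> LL X) :
  PhiOf Psi X A -> Phi (subposet Y S) -> monotone g ->
  incl (proj1_sig A) (bigcup S (fun y => proj1_sig (g y))) ->
  exists y, S y /\ le A (g y).
Proof.
  intros hA hS hg hcov.
  assert (hF : forall x x' y y', le x' x -> le y y' ->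
                 proj1_sig (g y) x -> proj1_sig (g y') x').
  { intros x x' y y' hx hy h; exact (hg y y' hy x' (proj2_sig (g y) x' x hx h)). }
  destruct (proj1 (Hc (@dcl_lower Y S) (jd_dcl JDf hS) (proj2_sig A) hA hF))
    as [y [[s [hs hys]] hy]].
  - intros x hx; destruct (hcov x hx) as [y [hy hxy]].
    exists y; split; [exists y; split; [exact hy | apply le_refl] | exact hxy].
  - exists s; split; [exact hs |]; intros x hx; exact (hg y s hys x (hy x hx)).
Qed.

Lemma Psi_compact (X : Poset) (A : LL X) : PhiOf Psi X A -> compact Phi (LL X) A.
Proof.
  intros hA phi hl hphi s hj hAs; rewrite (LL_join_eq hj) in hAs.
  destruct (commute_cover (g := fun B => B) hA hphi (fun _ _ h => h) hAs) as [B [hB hAB]].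
  exact (hl A B hAB hB).
Qed.

Lemma compact_iff_Psi (X : Poset) :
  psi_below_phi X -> forall A : LL X, PhiOf Psi X A <-> compact Phi (LL X) A.
Proof.
  intros hK A; split; [apply Psi_compact |].
  intros hc.
  destruct (compact_below_join JDf hc (hK A) (psi_below_join A) (le_refl A))
    as [C [[hC hCA] hAC]].
  rewrite (le_antisym hAC hCA); exact hC.
Qed.

Lemma PsiOf_closed_joins (X : Poset) : closed_joins Psi (PhiOf Psi X).
Proof.
  intros S s hS HS hj; rewrite (LL_join_eq hj).
  exact (jd_bigcup JDs (f := fun B : LL X => proj1_sig B) (fun _ _ h => h) hS HS).
Qed.

Lemma closed_sub_LL_join (W : Poset) (P : LL W -> Prop) :
  closed_joins Psi P -> forall S : subposet (LL W) P -> Prop, Psi (subposet _ S) ->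
  exists u, is_join S u /\
            proj1_sig (proj1_sig u) = bigcup S (fun q => proj1_sig (proj1_sig q)).
Proof.
  intros hP S hS.
  set (S' := fun B => exists q, S q /\ proj1_sig q = B).
  assert (hu : P (Lbigcup S' (fun B => B))).
  { apply (hP S'); [intros B [q [_ <-]]; exact (proj2_sig q) | | apply Lbigcup_join].
    exact (jd_image JDs (f := fun q : subposet (LL W) P => proj1_sig q) (fun _ _ h => h) hS). }
  exists (exist P _ hu); split; [split |].
  - intros q hq x hx; exists (proj1_sig q); split; [exists q; split; [exact hq | reflexivity] | exact hx].
  - intros t ht x [B [[q [hq <-]] hx]]; exact (ht q hq x hx).
  - apply pred_ext; intros x; split.
    + intros [B [[q [hq <-]] hx]]; exists q; split; assumption.
    + intros [q [hq hx]]; exists (proj1_sig q); split; [exists q; split; [exact hq | reflexivity] | exact hx].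
Qed.

Lemma Phi_lower_closed_joins (X : Poset) (A : X -> Prop) :
  lower A -> Phi (subposet X A) -> closed_joins Psi A.
Proof.
  intros hl hA S s hSA hS hj.
  assert (hF : forall x x' y y' : X, le x' x -> le y y' -> le x y -> le x' y').
  { intros x x' y y' h1 h2 h3; exact (le_trans h1 (le_trans h3 h2)). }
  destruct (proj1 (Hc hl hA (@dcl_lower X S) (jd_dcl JDs hS) hF)) as [y [hy hub]].
  - intros x [t [ht hxt]]; exists t; split; [exact (hSA t ht) | exact hxt].
  - apply (hl s y); [| exact hy].
    apply (proj2 hj); intros t ht; apply hub; exists t; split; [exact ht | apply le_refl].
Qed.

Lemma ideal_Phi (X : Poset) :
  psi_below_phi X -> suplattice Psi X ->
  forall A : X -> Prop, ideal Psi A -> Phi (subposet X A).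
Proof.
  intros hK hsup A [hl hcl].
  set (theta := exist _ A hl : LL X).
  pose (sup := fun p : subposet (LL X) (psi_below theta) =>
         proj1_sig (constructive_indefinite_description _ (hsup _ (proj1 (proj2_sig p))))).
  assert (sup_join : forall p, is_join (proj1_sig (proj1_sig p)) (sup p)).
  { intros p; exact (proj2_sig (constructive_indefinite_description _
                                  (hsup _ (proj1 (proj2_sig p))))). }
  apply (jd_transfer JDf (f := sup)); [| | | exact (hK theta)].
  - intros a b hab; apply (proj2 (sup_join a)).
    intros z hz; apply (proj1 (sup_join b)); exact (hab z hz).
  - intros p; exact (hcl _ _ (proj2 (proj2_sig p)) (proj1 (proj2_sig p)) (sup_join p)).
  - intros a ha; exists (exist _ (down a) (@down_psi_below X theta a ha)).
    apply (proj1 (sup_join _)); apply le_refl.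
Qed.

Lemma ideal_condition_at (X : Poset) :
  psi_below_phi X -> suplattice Psi X ->
  forall A : X -> Prop, (lower A /\ Phi (subposet X A)) <-> ideal Psi A.
Proof.
  intros hK hsup A; split.
  - intros [hl hA]; exact (conj hl (Phi_lower_closed_joins hl hA)).
  - intros hI; exact (conj (proj1 hI) (ideal_Phi hK hsup hI)).
Qed.

Lemma psi_below_phi_of_generated (X : Poset) :
  generated Phi (PhiOf Psi X) -> psi_below_phi X.
Proof.
  intros hgen theta; revert theta.
  apply (hgen (fun theta => Phi (subposet (LL X) (psi_below theta)))).
  - intros theta htheta.
    apply (jd_top JDf (t := exist _ theta (conj htheta (le_refl theta))
                              : subposet (LL X) (psi_below theta))).
    intros p; exact (proj2 (proj2_sig p)).
  - intros S s hS hSphi hj.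
    replace (psi_below s) with (bigcup S (@psi_below X)).
    + apply (jd_bigcup JDf); [| exact hS | exact hSphi].
      intros a b hab B [hB hBa]; exact (conj hB (le_trans hBa hab)).
    + apply pred_ext; intros B; split.
      * intros [t [ht [hB hBt]]]; exact (conj hB (le_trans hBt (proj1 hj t ht))).
      * intros [hB hBs].
        destruct (compact_below_join JDf (Psi_compact hB) hSphi hj hBs) as [t [ht hBt]].
        exists t; split; [exact ht | exact (conj hB hBt)].
Qed.

Lemma generated_of_psi_below_phi (X : Poset) :
  psi_below_phi X -> generated Phi (PhiOf Psi X).
Proof.
  intros hK T hT hcl theta.
  apply (hcl (psi_below theta) theta); [| exact (hK theta) | exact (psi_below_join theta)].
  intros B [hB _]; exact (hT B hB).
Qed.

Lemma psi_below_phi_of_ideal_condition :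
  ideal_condition -> forall X : Poset, psi_below_phi X.
Proof.
  intros hii X theta.
  assert (hY : suplattice Psi (PsiPoset Psi X)).
  { intros S hS; destruct (closed_sub_LL_join (@PsiOf_closed_joins X) hS) as [u [hu _]].
    exists u; exact hu. }
  set (A := fun p : PsiPoset Psi X => le (proj1_sig p) theta).
  assert (hA : ideal Psi A).
  { split; [intros a b hab hb; exact (@le_trans (LL X) _ _ _ hab hb) |].
    intros S s hSA hS hj.
    destruct (closed_sub_LL_join (@PsiOf_closed_joins X) hS) as [u [hu hueq]].
    rewrite (join_unique hj hu).
    intros x hx; change (proj1_sig (proj1_sig u) x) in hx; rewrite hueq in hx.
    destruct hx as [p [hp hx]]; exact (hSA p hp x hx). }
  replace (psi_below theta) with (fun B => exists p, A p /\ proj1_sig p = B).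
  - exact (jd_image JDf (f := fun p : PsiPoset Psi X => proj1_sig p) (fun _ _ h => h)
             (proj2 (proj2 (hii _ hY A) hA))).
  - apply pred_ext; intros B; split.
    + intros [p [hp <-]]; exact (conj (proj2_sig p) hp).
    + intros [hB hBt]; exists (exist _ B hB); split; [exact hBt | reflexivity].
Qed.

Lemma subsuplattice_of_ideal_condition : ideal_condition -> subsuplattice_condition.
Proof.
  intros hii X; exists (fun _ => True).
  split; [intros ? ? ? ? ?; exact I | split; [intros; exact I |]].
  intros J hJ; apply (hii _); [| exact hJ].
  intros S hS; destruct (closed_sub_LL_join (P := fun _ : LL X => True) (fun _ _ _ _ _ => I) hS)
    as [u [hu _]].
  exists u; exact hu.
Qed.

Lemma empty_ideal (Z : Poset) :
  (forall S : Z -> Prop, (forall z, ~ S z) -> ~ Psi (subposet Z S)) ->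
  ideal Psi (fun _ : Z => False).
Proof.
  intros hno; split; [intros x y _ h; exact h |].
  intros S s hS HS _; exact (hno S hS HS).
Qed.

Lemma psi_below_empty_phi (X : Poset) (theta : LL X) :
  subsuplattice_condition -> (forall B, ~ psi_below theta B) ->
  Phi (subposet (LL X) (psi_below theta)).
Proof.
  intros hiii hno; destruct (hiii X) as [P [_ [_ hPi]]].
  apply (jd_empty JDf (S := fun _ : subposet (LL X) P => False)); [intros _ h; exact h | exact hno |].
  apply hPi, empty_ideal; intros S hS HS.
  apply (hno (exist (@lower X) (fun _ : X => False) (fun _ _ _ h => h))); split.
  - exact (jd_empty JDs hS (fun _ h => h) HS).
  - intros x h; destruct h.
Qed.

Lemma in_or_empty_ideal (T : Type) (P : LL (discrete T) -> Prop) :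
  closed_joins Psi P ->
  ideal Psi (fun q : subposet (LL (discrete T)) P =>
               in_or_empty Psi (proj1_sig (proj1_sig q))).
Proof.
  intros hP; split.
  - intros a b hab [hb | hb].
    + left; intros w hw; exact (hb w (hab w hw)).
    + destruct (classic (exists w, proj1_sig (proj1_sig a) w)) as [[w hw] | hne].
      * right; exact (jd_discrete_sub JDs hab hw hb).
      * left; intros w hw; exact (hne (ex_intro _ w hw)).
  - intros S s hS HS hj.
    destruct (closed_sub_LL_join hP HS) as [u [hu hueq]].
    rewrite (join_unique hj hu), hueq.
    exact (jd_union_or_empty JDs (f := fun q : subposet (LL (discrete T)) P => proj1_sig (proj1_sig q))
             (fun _ _ h => h) hS HS).
Qed.

Lemma psi_below_nonempty_phi (X : Poset) (theta B0 : LL X) :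
  subsuplattice_condition -> psi_below theta B0 ->
  Phi (subposet (LL X) (psi_below theta)).
Proof.
  intros hiii hB0.
  set (W := discrete {B : LL X | psi_below theta B}).
  set (w0 := exist _ B0 hB0 : W).
  destruct (hiii W) as [P [hPc [hPd hPi]]].
  set (N := fun q : subposet (LL W) P => Psi (subposet W (proj1_sig (proj1_sig q)))).
  assert (hN : Phi (subposet _ N)).
  { apply (jd_cofinal_restrict JDf
             (A := fun q : subposet (LL W) P => in_or_empty Psi (proj1_sig (proj1_sig q)))).
    - intros q hq; right; exact hq.
    - intros q [hq | hq].
      + exists (exist P (down w0) (hPd w0)); split; [exact (jd_down JDs w0) |].
        intros w hw; destruct (hq w hw).
      + exists q; split; [exact hq | apply le_refl].
    - apply hPi, in_or_empty_ideal, hPc. }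
  apply (jd_transfer JDf (f := fun r : subposet _ N =>
           Lbigcup (proj1_sig (proj1_sig (proj1_sig r))) (fun w : W => proj1_sig w)));
    [| | | exact hN].
  - intros a b hab x [w [hw hx]]; exists w; split; [exact (hab w hw) | exact hx].
  - intros r; split.
    + apply (jd_bigcup JDs (f := fun w : W => proj1_sig (proj1_sig w)));
        [| intros w _; exact (proj1 (proj2_sig w)) | exact (proj2_sig r)].
      intros a b hab; destruct hab; intros x hx; exact hx.
    + intros x [w [_ hx]]; exact (proj2 (proj2_sig w) x hx).
  - intros B hB; set (w := exist _ B hB : W).
    exists (exist N (exist P (down w) (hPd w)) (jd_down JDs w)).
    intros x hx; exists w; split; [apply le_refl | exact hx].
Qed.

Lemma psi_below_phi_of_subsuplattice :
  subsuplattice_condition -> forall X : Poset, psi_below_phi X.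
Proof.
  intros hiii X theta.
  destruct (classic (exists B, psi_below theta B)) as [[B hB] | hno].
  - exact (psi_below_nonempty_phi hiii hB).
  - apply (psi_below_empty_phi hiii); intros B hB; exact (hno (ex_intro _ B hB)).
Qed.

Lemma LL_iso_Phi_Psi (X : Poset) :
  psi_below_phi X -> order_iso (LL X) (PhiPoset Phi (PsiPoset Psi X)).
Proof.
  intros hK.
  assert (below_lower : forall theta : LL X,
             lower (fun p : PsiPoset Psi X => le (proj1_sig p) theta)).
  { intros theta a b hab hb; exact (@le_trans (LL X) _ _ _ hab hb). }
  assert (below_phi : forall theta : LL X,
             Phi (subposet (PsiPoset Psi X) (fun p => le (proj1_sig p) theta))).
  { intros theta.
    apply (jd_transfer JDf (f := fun b : subposet (LL X) (psi_below theta) =>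
             exist _ (proj1_sig b) (proj1 (proj2_sig b)) : PsiPoset Psi X));
      [| | | exact (hK theta)].
    - intros a b h; exact h.
    - intros b; exact (proj2 (proj2_sig b)).
    - intros p hp; exists (exist _ (proj1_sig p) (conj (proj2_sig p) hp)).
      exact (le_refl (proj1_sig p)). }
  exists (fun theta => exist _ (exist _ _ (below_lower theta)) (below_phi theta)
                       : PhiPoset Phi (PsiPoset Psi X)).
  exists (fun y : PhiPoset Phi (PsiPoset Psi X) =>
            Lbigcup (proj1_sig (proj1_sig y)) (fun p : PsiPoset Psi X => proj1_sig p)).
  split; [| split; [| split]].
  - intros a b hab p hp; exact (@le_trans (LL X) _ _ _ hp hab).
  - intros a b hab x [p [hp hx]]; exists p; split; [exact (hab p hp) | exact hx].
  - intros theta; apply LL_ext; intros z; split.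
    + intros [p [hp hz]]; exact (hp z hz).
    + intros hz; exists (exist _ (down z) (jd_down JDs z)).
      split; [exact (proj2 (down_psi_below hz)) | apply le_refl].
  - intros y; apply le_antisym.
    + intros p hp.
      destruct (commute_cover (g := fun q : PsiPoset Psi X => proj1_sig q)
                  (proj2_sig p) (proj2_sig y) (fun _ _ h => h) hp) as [q [hq hpq]].
      exact (proj2_sig (proj1_sig y) p q hpq hq).
    + intros p hp x hx; exists p; split; [exact hp | exact hx].
Qed.

Lemma LL_algebraic (X : Poset) : psi_below_phi X -> algebraic Phi (LL X).
Proof.
  intros hK; split; [apply LL_suplattice |].
  intros T hT hcl; apply (generated_of_psi_below_phi hK); [| exact hcl].
  intros A hA; apply hT; exact (proj1 (compact_iff_Psi hK A) hA).
Qed.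

Lemma continuous_of_psi_below_phi :
  (forall X : Poset, psi_below_phi X) -> continuous_doctrine Phi.
Proof.
  intros hK X theta; exists (dcl (psi_below theta)).
  split; [apply dcl_lower | split; [exact (jd_dcl JDf (hK X theta)) | split]].
  - intros B [C [[hC hCt] hBC]]; exact (Ddown_below_compact (Psi_compact hC) hCt hBC).
  - intros x hx; exists (down x).
    split; [exists (down x); split; [exact (down_psi_below hx) | apply le_refl] | apply le_refl].
Qed.

Lemma StarClass_of_Phi (P : Poset) : Phi P -> StarClass Psi P.
Proof.
  intros hP phi hl hphi s hj htop; apply NNPP; intros hnot.
  assert (hPT : Phi (subposet P (fun _ => True))).
  { apply (jd_cofinal JDf); [| exact hP].
    intros x; exists x; split; [exact I | apply le_refl]. }
  assert (hF : forall (B B' : LL P) (p p' : P), le B' B -> le p p' ->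
                 ~ proj1_sig B p -> ~ proj1_sig B' p').
  { intros B B' p p' hB hp hnB hB'; apply hnB; exact (proj2_sig B p p' hp (hB p' hB')). }
  destruct (proj1 (Hc (fun _ _ _ _ => I) hPT hl hphi hF)) as [p [_ hp]].
  - intros B hB; apply NNPP; intros hall; apply hnot.
    replace (topL P) with B; [exact hB |].
    apply LL_ext; intros z; split; [intros _; exact I |].
    intros _; apply NNPP; intros hz; apply hall; exists z; split; [exact I | exact hz].
  - rewrite (LL_join_eq hj) in htop; destruct (htop p I) as [B [hB hBp]].
    exact (hp B hB hBp).
Qed.

Lemma proper_lower_ideal (P : Poset) :
  StarClass Psi P -> ideal Psi (fun B : LL P => exists p, ~ proj1_sig B p).
Proof.
  intros hst; split.
  - intros a b hab [p hp]; exists p; intros hap; exact (hp (hab p hap)).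
  - intros S s hS HS hj; apply NNPP; intros hs.
    destruct (compact_below_join JDs hst HS hj) as [C [hC htC]].
    + intros x _; apply NNPP; intros hx; apply hs; exists x; exact hx.
    + destruct (hS C hC) as [p hp]; exact (hp (htC p I)).
Qed.

(* [P] embeds into the proper lower sets of [P] by [p |-> P \ up p], cofinally. *)
Lemma Phi_of_StarClass (P : Poset) : ideal_condition -> StarClass Psi P -> Phi P.
Proof.
  intros hii hst.
  assert (compl_up_lower : forall p : P, lower (fun q => ~ le p q)).
  { intros p a b hab hb hpa; exact (hb (le_trans hpa hab)). }
  apply (jd_reflect JDf (e := fun p => exist _ _ (compl_up_lower p) : LL P)
           (A := fun B : LL P => exists p, ~ proj1_sig B p)).
  - intros a b hab; apply NNPP; intros hn; exact (hab b hn (le_refl b)).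
  - intros p; exists p; intros h; exact (h (le_refl p)).
  - intros B [p hp]; exists p; intros x hx hpx; exact (hp (proj2_sig B p x hpx hx)).
  - exact (proj2 (proj2 (hii _ (@LL_suplattice Psi P) _) (proper_lower_ideal hst))).
Qed.

End Doctrines.

Theorem proposition3p5 (Phi Psi : Class) :
  JoinDoctrine Phi -> JoinDoctrine Psi -> commute_in_2 Psi Phi ->
  let cond_i := forall X : Poset, generated Phi (PhiOf Psi X) in
  let cond_ii := forall X : Poset, suplattice Psi X ->
      forall A : X -> Prop, (lower A /\ Phi (subposet X A)) <-> ideal Psi A in
  let cond_iii := forall X : Poset, exists P : LL X -> Prop,
      closed_joins Psi P /\ (forall x : X, P (down x)) /\
      (forall I : subposet (LL X) P -> Prop, ideal Psi I -> Phi (subposet _ I)) in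
  (cond_i <-> cond_ii) /\ (cond_ii <-> cond_iii) /\
  (cond_i ->
     (forall X : Poset,
        (forall A : LL X, PhiOf Psi X A <-> compact Phi (LL X) A) /\
        (forall A : LL X, compact Phi (LL X) A <-> PhiStar Phi X A) /\
        order_iso (LL X) (PhiPoset Phi (PsiPoset Psi X)) /\
        algebraic Phi (LL X)) /\
     continuous_doctrine Phi /\
     (forall P : Poset, Phi P <-> StarClass Psi P)).
Proof.
  intros JDf JDs Hc cond_i cond_ii cond_iii.
  assert (K_of_i : cond_i -> forall X, psi_below_phi Phi Psi X).
  { intros hi X; exact (psi_below_phi_of_generated JDf Hc (hi X)). }
  assert (ii_of_K : (forall X, psi_below_phi Phi Psi X) -> cond_ii).
  { intros hK X; exact (ideal_condition_at JDf JDs Hc (hK X)). }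
  split; [split | split; [split |]].
  - intros hi; exact (ii_of_K (K_of_i hi)).
  - intros hii X; exact (generated_of_psi_below_phi JDs
                           (psi_below_phi_of_ideal_condition JDf JDs hii (X := X))).
  - exact (subsuplattice_of_ideal_condition (Phi := Phi) JDs).
  - intros hiii; exact (ii_of_K (psi_below_phi_of_subsuplattice JDf JDs hiii)).
  - intros hi; pose proof (K_of_i hi) as hK.
    split; [intros X; split; [| split; [| split]] | split].
    + exact (compact_iff_Psi JDf JDs Hc (hK X)).
    + intros A; reflexivity.
    + exact (LL_iso_Phi_Psi JDf JDs Hc (hK X)).
    + exact (LL_algebraic JDf JDs Hc (hK X)).
    + exact (continuous_of_psi_below_phi JDf JDs Hc hK).
    + intros P; split; [exact (StarClass_of_Phi JDf Hc (P := P)) |].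
      exact (Phi_of_StarClass JDf JDs (P := P) (ii_of_K hK)).
Qed.
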